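(* Let $f=\|\cdot\|$ be an arbitrary (not necessarily Euclidean) norm on $\mathbb{R}^n$. Then: (i) for every $v\in\partial f(0)$, $f$ is twice epi-differentiable at $0$ for $v$ and $d^2f(0|v)=\delta_{K(0,v)}$; (ii) for $v\in\partial f(0)$, $f$ is generalized twice differentiable at $0$ for $v$ if and only if $v\in\operatorname{int}\partial f(0)$.
   Context: $\partial f$ is the convex subdifferential. First subderivative: $df(\bar x)(w)=\liminf_{t\downarrow0,w'\to w}\frac{f(\bar x+tw')-f(\bar x)}{t}$; critical cone $K(\bar x,\bar v)=\{w:df(\bar x)(w)=\langle\bar v,w\rangle\}$. $\delta_C$ is the indicator of $C$ ($0$ on $C$, $\infty$ off $C$). Second subderivative $d^2f(\bar x|\bar v)(w)=\liminf_{t\downarrow0,w'\to w}\Delta^2_tf(\bar x|\bar v)(w')$ with $\Delta_t^2f(\bar x|\bar v)(w)=\frac{f(\bar x+tw)-f(\bar x)-t\langle\bar v,w\rangle}{\frac12t^2}$; twice epi-differentiability at $\bar x$ for $\bar v$ means $\Delta_t^2f(\bar x|\bar v)$ epi-converges as $t\downarrow0$. A generalized quadratic form is $\frac12\langle\cdot,A\cdot\rangle+\delta_L$, $A$ symmetric, $L$ a linear subspace; generalized twice differentiability at $\bar x$ for $\bar v\in\partial f(\bar x)$ means twice epi-differentiability with $d^2f(\bar x|\bar v)$ a generalized quadratic form. *)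

(* R^n is modelled as row vectors 'rV[R]_n
   with their standard (product) topology. *)
From HB Require Import structures.
From mathcomp Require Import all_boot all_order all_algebra.
From mathcomp Require Import all_classical all_reals all_analysis.
Set Implicit Arguments. Unset Strict Implicit. Unset Printing Implicit Defensive.
Import Order.TTheory GRing.Theory Num.Theory.
Import numFieldNormedType.Exports.
Local Open Scope classical_set_scope.
Local Open Scope ring_scope.

Section Defs.
Variables (R : realType) (n : nat).
Notation V := 'rV[R]_n.

Definition dotp (v w : V) : R := \sum_(i < n) v ord0 i * w ord0 i.

Definition is_norm (f : V -> R) : Prop :=
  [/\ forall x, f x = 0 -> x = 0,
      forall (a : R) x, f (a *: x) = `|a| * f x &
      forall x y, f (x + y) <= f x + f y].

Definition subdiff (f : V -> R) (x : V) : set V :=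
  [set v | forall y, f x + dotp v (y - x) <= f y].

(* liminf_{t \downarrow 0, w' -> w} g t w' *)
Definition liminf_tw (g : R -> V -> \bar R) (w : V) : \bar R :=
  ereal_sup [set ereal_inf [set g t w' | t in [set t | 0 < t < e] & w' in [set w' | `|w' - w| < e]]
            | e in [set e : R | 0 < e]].

Definition subderiv1 (f : V -> R) (x w : V) : \bar R :=
  liminf_tw (fun t w' => ((f (x + t *: w') - f x) / t)%:E) w.

Definition crit_cone (f : V -> R) (x v : V) : set V :=
  [set w | subderiv1 f x w = (dotp v w)%:E].

Definition indicator (C : set V) (w : V) : \bar R :=
  if `[< C w >] then 0%E else +oo%E.

Definition diffq2 (f : V -> R) (x v : V) (t : R) (w : V) : \bar R :=
  ((f (x + t *: w) - f x - t * dotp v w) / (t ^+ 2 / 2))%:E.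

Definition subderiv2 (f : V -> R) (x v w : V) : \bar R :=
  liminf_tw (diffq2 f x v) w.

(* epi-convergence of phi_t to phi0 as t \downarrow 0
   (sequential characterization, Rockafellar-Wets Prop. 7.2,
   required along every sequence t_k \downarrow 0) *)
Definition epi_conv (phi : R -> V -> \bar R) (phi0 : V -> \bar R) : Prop :=
  forall w : V,
    (forall (t : R^nat) (w_ : nat -> V), (forall k, 0 < t k) -> t @ \oo --> 0 ->
        w_ @ \oo --> w -> (phi0 w <= limn_einf (fun k => phi (t k) (w_ k)))%E) /\
    (forall t : R^nat, (forall k, 0 < t k) -> t @ \oo --> 0 ->
        exists w_ : nat -> V, w_ @ \oo --> w /\
          (limn_esup (fun k => phi (t k) (w_ k)) <= phi0 w)%E).

Definition twice_epi_diff (f : V -> R) (x v : V) : Prop :=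
  exists phi0, epi_conv (diffq2 f x v) phi0.

(* generalized quadratic form: 1/2 <w, A w> + delta_L, A symmetric,
   L a linear subspace (represented as the row space of a matrix) *)
Definition gen_quad_form (phi : V -> \bar R) : Prop :=
  exists (A L : 'M[R]_n), A^T = A /\
    forall w, phi w = if (w <= L)%MS then ((w *m A *m w^T) ord0 ord0 / 2)%:E
                      else +oo%E.

Definition gen_twice_diff (f : V -> R) (x v : V) : Prop :=
  subdiff f x v /\ twice_epi_diff f x v /\ gen_quad_form (subderiv2 f x v).

End Defs.

From mathcomp Require Import all_boot all_order all_algebra.
From mathcomp Require Import all_classical all_reals all_analysis.
From mathcomp Require Import ring lra.
Import Order.TTheory GRing.Theory Num.Theory.
Import numFieldNormedType.Exports.
Set Implicit Arguments. Unset Strict Implicit. Unset Printing Implicit Defensive.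
Local Open Scope classical_set_scope.
Local Open Scope ring_scope.

(* Write g w := f w - <v, w>, which is nonnegative because v is a subgradient at 0.
   Since f is positively homogeneous, the second-order difference quotient of f at 0
   for v is 2 g w' / t.  As g is Lipschitz, these quotients go to 0 on the cone
   K = {g = 0} and to +oo off K, uniformly for w' near w, so they epi-converge to the
   indicator of K; and K is the critical cone since the first subderivative of f at 0
   is f itself.  A generalized quadratic form is finite exactly on a subspace, so the
   indicator of K is one only if K = -K; as f w + f (-w) = 0 on K, this means K = {0}.
   Compactness of the unit sphere then yields g w >= d |w| for some d > 0, which puts
   a ball around v inside the subdifferential.  Conversely, if v is interior, moving v
   slightly along w shows g w > 0 for w <> 0, so K = {0}. *)

Section dotp.
Variables (R : realType) (n : nat).
Implicit Types (a : R) (u v w : 'rV[R]_n).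

Lemma dotpDl u v w : dotp (u + v) w = dotp u w + dotp v w.
Proof. by rewrite /dotp -big_split; apply: eq_bigr => i _; rewrite mxE mulrDl. Qed.

Lemma dotpBl u v w : dotp (u - v) w = dotp u w - dotp v w.
Proof. by rewrite /dotp -sumrB; apply: eq_bigr => i _; rewrite !mxE mulrBl. Qed.

Lemma dotpZl a u w : dotp (a *: u) w = a * dotp u w.
Proof. by rewrite /dotp mulr_sumr; apply: eq_bigr => i _; rewrite mxE mulrA. Qed.

Lemma dotpDr u v w : dotp u (v + w) = dotp u v + dotp u w.
Proof. by rewrite /dotp -big_split; apply: eq_bigr => i _; rewrite mxE mulrDr. Qed.

Lemma dotpZr a u w : dotp u (a *: w) = a * dotp u w.
Proof. by rewrite /dotp mulr_sumr; apply: eq_bigr => i _; rewrite mxE mulrCA. Qed.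

Lemma dotpNr u w : dotp u (- w) = - dotp u w.
Proof. by rewrite -scaleN1r dotpZr mulN1r. Qed.

Lemma dotp0r u : dotp u 0 = 0.
Proof. by rewrite -(scale0r 0) dotpZr mul0r. Qed.

Lemma normr_coord w i : `|w ord0 i| <= `|w|.
Proof.
by rewrite [leRHS]/Num.norm /= mx_normrE; apply/bigmax_geP; right; exists (ord0, i).
Qed.

Lemma normr_dotp_le u w : `|dotp u w| <= n%:R * `|u| * `|w|.
Proof.
rewrite /dotp (le_trans (ler_norm_sum _ _ _)) //.
rewrite -mulrA mulr_natl -[n in _ *+ n]card_ord -sumr_const ler_sum // => i _.
by rewrite normrM ler_pM ?normr_coord.
Qed.

Lemma dotpp_gt0 w : w != 0 -> 0 < dotp w w.
Proof.
move=> w0; rewrite lt_def sumr_ge0 ?andbT => [|i _]; last by rewrite -expr2 sqr_ge0.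
apply: contra w0 => /eqP /psumr_eq0P w2_eq0; apply/eqP/rowP => i.
have /eqP : w ord0 i * w ord0 i == 0 by rewrite w2_eq0 // => j _; rewrite -expr2 sqr_ge0.
by rewrite mxE => /eqP; rewrite mulf_eq0 orbb => /eqP.
Qed.

End dotp.

Lemma lipschitz_continuous (R : realFieldType) (V W : normedModType R)
    (F : V -> W) (k : R) :
  (forall x y, `|F x - F y| <= k * `|x - y|) -> continuous F.
Proof.
move=> Flip x; apply/cvgrPdist_lt => e e0.
have k1 : 0 < `|k| + 1 by rewrite ltr_pwDr.
apply/nbhs_ballP; exists (e / (`|k| + 1)) => [|y]; first by rewrite /= divr_gt0.
rewrite -ball_normE /= => xy; apply: le_lt_trans (Flip x y) _.
apply: (@le_lt_trans _ _ ((`|k| + 1) * `|x - y|)); last by rewrite mulrC -ltr_pdivlMr.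
by rewrite ler_wpM2r // (le_trans (ler_norm k)) // lerDl.
Qed.

Section is_norm.
Variables (R : realType) (n : nat) (f : 'rV[R]_n -> R).
Hypothesis f_norm : is_norm f.
Implicit Types x y : 'rV[R]_n.

Lemma is_norm_eq0 x : f x = 0 -> x = 0.
Proof. by case: f_norm => + _ _; apply. Qed.

Lemma is_normZ (a : R) x : f (a *: x) = `|a| * f x.
Proof. by case: f_norm. Qed.

Lemma is_normD x y : f (x + y) <= f x + f y.
Proof. by case: f_norm. Qed.

Lemma is_norm0 : f 0 = 0.
Proof. by rewrite -(scale0r 0) is_normZ normr0 mul0r. Qed.

Lemma is_normN x : f (- x) = f x.
Proof. by rewrite -scaleN1r is_normZ normrN normr1 mul1r. Qed.

Lemma is_norm_ge0 x : 0 <= f x.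
Proof. by have := is_normD x (- x); rewrite subrr is_norm0 is_normN; lra. Qed.

Lemma is_norm_le : exists C, forall x, f x <= C * `|x|.
Proof.
exists (\sum_(i < n) f (delta_mx ord0 i)) => x.
rewrite {1}(matrix_sum_delta x) big_ord1 mulr_suml.
elim/big_rec2 : _ => [|i a b _ IH]; first by rewrite is_norm0.
rewrite (le_trans (is_normD _ _)) // lerD // is_normZ mulrC.
by rewrite ler_wpM2l ?is_norm_ge0 ?normr_coord.
Qed.

Lemma is_norm_lipschitz : exists C, forall x y, `|f x - f y| <= C * `|x - y|.
Proof.
have [C fC] := is_norm_le; exists C => x y.
have := is_normD (x - y) y; have := is_normD (y - x) x.
rewrite !subrK -opprB is_normN ler_norml; have := fC (x - y); lra.
Qed.

End is_norm.

Lemma limn_einf_ge (R : realType) (u : (\bar R)^nat) (x : \bar R) N :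
  (forall k, (N <= k)%N -> (x <= u k)%E) -> (x <= limn_einf u)%E.
Proof.
move=> xu; rewrite limn_einf_lim (cvg_lim _ (@cvg_einfs_sup _ u)) //.
apply: le_ereal_sup_tmp; exists (einfs u N); first by exists N.
by apply: le_ereal_inf_tmp => _ [k /= Nk <-]; apply: xu.
Qed.

Lemma limn_esup_le (R : realType) (u : (\bar R)^nat) (x : \bar R) :
  (forall k, (u k <= x)%E) -> (limn_esup u <= x)%E.
Proof.
move=> ux; rewrite limn_esup_lim (cvg_lim _ (@cvg_esups_inf _ u)) //.
apply: ge_ereal_inf; exists (esups u 0); first by exists 0%N.
by apply: ge_ereal_sup => _ [k /= _ <-]; apply: ux.
Qed.

Section liminf_tw.
Variables (R : realType) (n : nat).
Notation V := 'rV[R]_n.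
Implicit Types (g : R -> V -> \bar R) (w : V).

Lemma eq_liminf_tw g g' w :
  (forall t w', 0 < t -> g t w' = g' t w') -> liminf_tw g w = liminf_tw g' w.
Proof.
move=> gg'; congr ereal_sup; apply: eq_imagel => e _; congr ereal_inf.
by apply/seteqP; split=> _ [t /[dup] /andP[t0 _] te [w' w'w <-]];
  exists t => //; exists w' => //; rewrite gg'.
Qed.

Lemma liminf_tw_le g w x :
  (forall e, 0 < e -> exists2 t, 0 < t < e & (g t w <= x)%E) ->
  (liminf_tw g w <= x)%E.
Proof.
move=> gx; apply: ge_ereal_sup => _ [e e0 <-]; have [t te gtx] := gx e e0.
apply: le_trans gtx; apply: ereal_inf_lbound; exists t => //.
by exists w => //=; rewrite subrr normr0.
Qed.

Lemma liminf_tw_ge g w x e : 0 < e ->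
  (forall t w', 0 < t < e -> `|w' - w| < e -> (x <= g t w')%E) ->
  (x <= liminf_tw g w)%E.
Proof.
move=> e0 xg; apply: le_ereal_sup_tmp; eexists; first by exists e.
by apply: le_ereal_inf_tmp => _ [t te [w' w'w <-]]; apply: xg.
Qed.

Lemma liminf_tw_le_limn_einf g w (t : R^nat) (ws : nat -> V) :
  (forall k, 0 < t k) -> t @ \oo --> 0 -> ws @ \oo --> w ->
  (liminf_tw g w <= limn_einf (fun k => g (t k) (ws k)))%E.
Proof.
move=> t_gt0 t0 ws_w; apply: ge_ereal_sup => _ [e e0 <-].
have [N _ Nnear] := filterI (cvgr_dist_lt _ _ t0 _ e0) (cvgr_dist_lt _ _ ws_w _ e0).
apply: (limn_einf_ge (N := N)) => k /Nnear[/= tk wsk]; apply: ereal_inf_lbound.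
exists (t k); first by rewrite /= t_gt0 -(gtr0_norm (t_gt0 k)) -normrN -sub0r.
by exists (ws k) => //=; rewrite distrC.
Qed.

Lemma liminf_tw_continuous (G : V -> R) w : {for w, continuous G} ->
  liminf_tw (fun _ w' => (G w')%:E) w = (G w)%:E.
Proof.
move=> /cvgrPdist_le Gw; apply/eqP; rewrite eq_le; apply/andP; split.
  apply: liminf_tw_le => e e0; exists (e / 2) => //.
  by rewrite divr_gt0 //= ltr_pdivrMr //; lra.
apply/lee_subgt0Pr => eps eps0; have /nbhs_ballP[d d0 Gd] := Gw eps eps0.
apply: (liminf_tw_ge (e := d)) => // t w' _ w'w.
have := Gd w'; rewrite -ball_normE /= distrC => /(_ w'w); rewrite lee_fin ler_distlC.
by case/andP.
Qed.

Lemma liminf_tw_div (H : V -> R) (k : R) w :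
  (forall w', 0 <= H w') -> (forall x y, `|H x - H y| <= k * `|x - y|) ->
  liminf_tw (fun t w' => (H w' / t)%:E) w = if H w == 0 then 0%E else +oo%E.
Proof.
move=> H_ge0 Hlip; have [Hw0|Hw_neq0] := eqVneq (H w) 0.
  apply/eqP; rewrite eq_le; apply/andP; split.
    apply: liminf_tw_le => e e0; exists (e / 2); last by rewrite Hw0 mul0r.
    by rewrite divr_gt0 //= ltr_pdivrMr //; lra.
  apply: (liminf_tw_ge (x := 0%:E) (e := 1)) => // t w' /andP[t0 _] _.
  by rewrite lee_fin divr_ge0 // ltW.
have Hw0 : 0 < H w by rewrite lt_def Hw_neq0 H_ge0.
apply/eqyP => M M0; have k1 : 0 < `|k| + M + 1 by rewrite -addrA ltr_pwDr ?addr_gt0.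
(* e is small enough that both |k| e and M e are at most H w / 2 *)
pose e := H w / (2 * (`|k| + M + 1)).
have e0 : 0 < e by rewrite divr_gt0 ?mulr_gt0.
have eE : 2 * (`|k| + M + 1) * e = H w by rewrite mulrC divfK // gt_eqF ?mulr_gt0.
apply: (liminf_tw_ge (e := e)) => // t w' /andP[t0 te] w'w; rewrite lee_fin ler_pdivlMr //.
have Hw' : H w - H w' <= `|k| * `|w' - w|.
  apply: le_trans (ler_norm _) _; apply: le_trans (Hlip _ _) _.
  by rewrite distrC ler_wpM2r // ler_norm.
have : `|k| * `|w' - w| <= `|k| * e by rewrite ler_wpM2l // ltW.
have : M * t <= M * e by rewrite ler_wpM2l // ltW.
have : 0 <= `|k| * e by rewrite mulr_ge0 // ltW.
lra.
Qed.

Lemma epi_conv_liminf_tw (phi : R -> V -> \bar R) :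
  (forall t w, 0 < t -> (phi t w <= liminf_tw phi w)%E) ->
  epi_conv phi (liminf_tw phi).
Proof.
move=> phi_le w; split=> [t ws t_gt0 t0 ws_w|t t_gt0 _].
  exact: liminf_tw_le_limn_einf.
by exists (fun=> w); split; [exact: cvg_cst | apply: limn_esup_le => k; apply: phi_le].
Qed.

End liminf_tw.

Lemma pos_homogeneous_coercive (R : realType) (n : nat) (H : 'rV[R]_n -> R) :
  continuous H -> (forall (a : R) w, 0 <= a -> H (a *: w) = a * H w) ->
  (forall w, w != 0 -> 0 < H w) ->
  exists2 d, 0 < d & forall w, d * `|w| <= H w.
Proof.
move=> Hcont Hhom Hpos.
have H0 : H 0 = 0 by rewrite -(scale0r 0) Hhom // mul0r.
have normalize (w : 'rV[R]_n) : w != 0 -> `| `|w|^-1 *: w| = 1.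
  by move=> w0; rewrite normrZ ger0_norm ?invr_ge0 // mulVf ?normr_eq0.
have homE (w : 'rV[R]_n) : w != 0 -> H w = `|w| * H (`|w|^-1 *: w).
  by move=> w0; rewrite Hhom ?invr_ge0 // mulrA divff ?normr_eq0 ?mul1r.
pose S := [set w : 'rV[R]_n | `|w| = 1].
have [[u Su]|S0] := pselect (S !=set0); last first.
  exists 1 => // w; have [->|w0] := eqVneq w 0; first by rewrite normr0 mulr0 H0.
  by exfalso; apply: S0; exists (`|w|^-1 *: w); apply: normalize.
have Scompact : compact S.
  apply: bounded_closed_compact; last first.
    apply: (@preimage_closed _ _ (@Num.norm _ 'rV[R]_n) [set x | x = 1]).
      by move=> w _; apply: norm_continuous.
    exact: closed_eq.
  by exists 1; split=> // M M1 w /= ->; rewrite ltW.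
have [c /[!inE] Sc cmin] := compact_EVT_min (ex_intro _ u Su) Scompact
  (continuous_subspaceT Hcont).
have c0 : c != 0 by apply: contra_eq_neq Sc => ->; rewrite normr0 eq_sym oner_neq0.
exists (H c) => [|w]; first exact: Hpos.
have [->|w0] := eqVneq w 0; first by rewrite normr0 mulr0 H0.
by rewrite (homE w w0) [leLHS]mulrC ler_wpM2l // cmin // inE; apply: normalize.
Qed.

Lemma gen_quad_formN (R : realType) (n : nat) (phi : 'rV[R]_n -> \bar R) w :
  gen_quad_form phi -> phi w != +oo%E -> phi (- w) != +oo%E.
Proof. by move=> [A [L [_ phiE]]]; rewrite !phiE eqmx_opp; case: ifP. Qed.

Lemma interior_normP (K : numFieldType) (V : normedModType K) (A : set V) x :
  interior A x <-> exists2 e, 0 < e & forall y, `|x - y| < e -> A y.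
Proof.
rewrite /interior /= nbhs_ballP.
split=> -[e e0 eA]; exists e => // y.
  by move=> xy; apply: eA; rewrite -ball_normE.
by rewrite -ball_normE => /eA.
Qed.

Section norm_at_zero.
Variables (R : realType) (n : nat) (f : 'rV[R]_n -> R) (v : 'rV[R]_n).
Hypotheses (f_norm : is_norm f) (v_subdiff : subdiff f 0 v).
Implicit Types w : 'rV[R]_n.

Let gap w := f w - dotp v w.

Lemma gap_ge0 w : 0 <= gap w.
Proof. by have := v_subdiff w; rewrite is_norm0 // add0r subr0 subr_ge0. Qed.

Lemma gap0 : gap 0 = 0.
Proof. by rewrite /gap is_norm0 // dotp0r subrr. Qed.

Lemma gapZ (a : R) w : 0 <= a -> gap (a *: w) = a * gap w.
Proof. by move=> a0; rewrite /gap is_normZ // dotpZr ger0_norm // mulrBr. Qed.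

Lemma gap_lipschitz : exists k, forall x y, `|gap x - gap y| <= k * `|x - y|.
Proof.
have [C fC] := is_norm_lipschitz f_norm; exists (C + n%:R * `|v|) => x y.
have -> : gap x - gap y = (f x - f y) - dotp v (x - y).
  by rewrite dotpDr dotpNr /gap; ring.
by rewrite (le_trans (ler_normB _ _)) // mulrDl lerD // normr_dotp_le.
Qed.

Lemma diffq2_at0 t w : 0 < t -> diffq2 f 0 v t w = (2 * gap w / t)%:E.
Proof.
move=> t0; rewrite /diffq2 add0r is_norm0 // subr0 is_normZ // gtr0_norm // /gap.
by congr EFin; field; rewrite gt_eqF.
Qed.

Lemma subderiv2_at0 w : subderiv2 f 0 v w = if gap w == 0 then 0%E else +oo%E.
Proof.
have [k gap_lip] := gap_lipschitz.
rewrite /subderiv2 (eq_liminf_tw _ (fun t w' => @diffq2_at0 t w')).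
rewrite (liminf_tw_div (k := 2 * k)) => [|w'|x y]; last 2 first.
- by rewrite mulr_ge0 ?gap_ge0.
- by rewrite -mulrBr normrM ger0_norm // -mulrA ler_wpM2l.
by rewrite mulf_eq0 pnatr_eq0.
Qed.

Lemma subderiv1_at0 w : subderiv1 f 0 w = (f w)%:E.
Proof.
have [C fC] := is_norm_lipschitz f_norm.
rewrite /subderiv1 (eq_liminf_tw _ (g' := fun _ w' => (f w')%:E)).
  exact/liminf_tw_continuous/lipschitz_continuous.
move=> t w' t0; rewrite add0r is_norm0 // subr0 is_normZ // gtr0_norm //.
by rewrite mulrC mulKf // gt_eqF.
Qed.

Lemma crit_cone_at0 w : crit_cone f 0 v w <-> gap w = 0.
Proof.
rewrite /crit_cone /= subderiv1_at0 /gap.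
by split=> [[->]|/eqP]; [rewrite subrr | rewrite subr_eq0 => /eqP ->].
Qed.

Lemma subderiv2_at0_indicator : subderiv2 f 0 v = indicator (crit_cone f 0 v).
Proof.
apply/funext => w; rewrite subderiv2_at0 /indicator.
by case: eqP => gapw; [rewrite asboolT | rewrite asboolF] => //; apply/crit_cone_at0.
Qed.

Lemma twice_epi_diff_at0 : twice_epi_diff f 0 v.
Proof.
exists (subderiv2 f 0 v); apply: epi_conv_liminf_tw => t w t0.
rewrite -/(subderiv2 f 0 v w) subderiv2_at0 diffq2_at0 //.
by case: eqP => [->|_]; rewrite ?leey // mulr0 mul0r.
Qed.

Lemma interior_subdiff_gap_eq0 w : interior (subdiff f 0) v -> gap w = 0 -> w = 0.
Proof.
move=> /interior_normP[e e0 ball_subdiff] gapw; apply/eqP; apply: contraT => w0.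
(* v + c w is a subgradient for small c > 0, so f w >= dotp v w + c dotp w w > f w *)
pose c := e / (2 * `|w|).
have c0 : 0 < c by rewrite divr_gt0 ?mulr_gt0 ?normr_gt0.
have /(_ w) : subdiff f 0 (v + c *: w).
  apply: ball_subdiff; rewrite opprD addNKr normrN normrZ gtr0_norm //.
  have : c * (2 * `|w|) = e by rewrite divfK // mulf_neq0 ?normr_eq0.
  lra.
rewrite is_norm0 // add0r subr0 dotpDl dotpZl.
have : 0 < c * dotp w w by rewrite mulr_gt0 ?dotpp_gt0.
by move: gapw; rewrite /gap; lra.
Qed.

Lemma gen_twice_diff_gap_eq0 w : gen_twice_diff f 0 v -> gap w = 0 -> w = 0.
Proof.
move=> [_ [_ quad]] gapw; apply: (is_norm_eq0 f_norm).
have /(gen_quad_formN quad) : subderiv2 f 0 v w != +oo%E.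
  by rewrite subderiv2_at0 gapw eqxx.
rewrite subderiv2_at0 /gap is_normN // dotpNr.
case: ifP => [/eqP gapNw _|]; last by rewrite eqxx.
by move: gapw; rewrite /gap; lra.
Qed.

Lemma gap_eq0_gen_quad_form :
  (forall w, gap w = 0 -> w = 0) -> gen_quad_form (subderiv2 f 0 v).
Proof.
move=> gap_eq0; exists 0, 0; split=> [|w]; first exact: trmx0.
rewrite subderiv2_at0 submx0 mulmx0 mul0mx mxE mul0r.
have [->|w0] := eqVneq w 0; first by rewrite gap0 eqxx.
by case: eqP => // /gap_eq0 /eqP; rewrite (negbTE w0).
Qed.

Lemma coercive_gap_interior :
  (exists2 d, 0 < d & forall w, d * `|w| <= gap w) -> interior (subdiff f 0) v.
Proof.
move=> [d d0 gap_ge]; apply/interior_normP.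
exists (d / (n%:R + 1)) => [|u uv y]; first by rewrite divr_gt0 ?ltr_pwDr.
rewrite is_norm0 // add0r subr0.
have nuv : n%:R * `|u - v| <= d.
  move: uv; rewrite distrC ltr_pdivlMr ?ltr_pwDr // => /ltW.
  by have := normr_ge0 (u - v); lra.
have := normr_dotp_le (u - v) y; rewrite dotpBl ler_norml => /andP[_].
have : n%:R * `|u - v| * `|y| <= d * `|y| by rewrite ler_wpM2r.
by have := gap_ge y; rewrite /gap; lra.
Qed.

Lemma gen_twice_diff_at0 : gen_twice_diff f 0 v <-> interior (subdiff f 0) v.
Proof.
split=> [gtd|vint].
  apply: coercive_gap_interior; apply: pos_homogeneous_coercive.
  - by have [k gap_lip] := gap_lipschitz; apply: lipschitz_continuous gap_lip.
  - exact: gapZ.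
  - move=> w w0; rewrite lt_def gap_ge0 andbT.
    by apply: contra w0 => /eqP /(gen_twice_diff_gap_eq0 gtd) ->.
split=> //; split; first exact: twice_epi_diff_at0.
by apply: gap_eq0_gen_quad_form => w; apply: interior_subdiff_gap_eq0.
Qed.

End norm_at_zero.

Theorem theorem4p3 (R : realType) (n : nat) (f : 'rV[R]_n -> R) :
  is_norm f ->
  (forall v, subdiff f 0 v ->
     twice_epi_diff f 0 v /\
     subderiv2 f 0 v = indicator (crit_cone f 0 v)) /\
  (forall v, subdiff f 0 v ->
     (gen_twice_diff f 0 v <-> (interior (subdiff f 0 : set 'rV[R]_n)) v)).
Proof.
move=> f_norm; split=> v v_subdiff; last exact: gen_twice_diff_at0.
by split; [apply: twice_epi_diff_at0 | apply: subderiv2_at0_indicator].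
Qed.
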